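(* Let $X$ be a proper geodesic metric space with base point $o$. Let $\delta>\epsilon>0$, $C>0$, and $(q_1,Q_1),(q_2,Q_2)\in[1,\infty)\times[0,\infty)$. Then there is a constant $M=M(\delta,\epsilon,q_1,Q_1,q_2,Q_2,C)$ such that the following holds. Let $r>1$ and let $\alpha$ be a $(q_1,Q_1)$-quasi-geodesic segment starting at $o$, lying entirely in the closed ball $B_{\epsilon r}=\bar B(o,\epsilon r)$, whose terminal point $\alpha_+$ lies on the sphere $S(o,\epsilon r)$. Let $\zeta$ be a geodesic ray starting at $o$ and passing through $\alpha_+$, and let $p$ be the point of $\zeta$ on the sphere $S(o,\delta r)$. Let $\gamma$ be a $(q_2,Q_2)$-quasi-geodesic starting at $p$ which lies entirely outside the open ball $B^o(o,\delta r)$ and has length $\ell(\gamma)\le Cr$. Then the concatenation $\sigma=\alpha\cup[\alpha_+,p]\cup\gamma$, where $[\alpha_+,p]$ is the subsegment of $\zeta$, is an $(M,M)$-quasi-geodesic.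
   Context: A $(q,Q)$-quasi-geodesic in a metric space $X$ is a map $\alpha\colon I\to X$, $I\subset\mathbb R$ an interval, with $\frac{|s-t|}{q}-Q\le d(\alpha(s),\alpha(t))\le q|s-t|+Q$ for all $s,t\in I$; quasi-geodesics may be assumed continuous (Lipschitz), and concatenations are parametrized accordingly. *)

From Stdlib Require Import Reals Lra List.
Open Scope R_scope.

Definition is_metric {X : Type} (d : X -> X -> R) : Prop :=
  (forall x y, d x y = 0 <-> x = y) /\
  (forall x y, d x y = d y x) /\
  (forall x y z, d x z <= d x y + d y z).

Definition is_open {X : Type} (d : X -> X -> R) (U : X -> Prop) : Prop :=
  forall x, U x -> exists e, 0 < e /\ forall y, d x y < e -> U y.

Definition compact_set {X : Type} (d : X -> X -> R) (K : X -> Prop) : Prop :=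
  forall (I : Type) (U : I -> X -> Prop),
    (forall i, is_open d (U i)) ->
    (forall x, K x -> exists i, U i x) ->
    exists l : list I, forall x, K x -> exists i, In i l /\ U i x.

Definition proper_space {X : Type} (d : X -> X -> R) : Prop :=
  forall x rad, compact_set d (fun y => d x y <= rad).

Definition geodesic_space {X : Type} (d : X -> X -> R) : Prop :=
  forall x y, exists g : R -> X, g 0 = x /\ g (d x y) = y /\
    forall s t, 0 <= s <= d x y -> 0 <= t <= d x y -> d (g s) (g t) = Rabs (s - t).

Definition geodesic_ray {X : Type} (d : X -> X -> R) (o : X) (zeta : R -> X) : Prop :=
  zeta 0 = o /\ forall s t, 0 <= s -> 0 <= t -> d (zeta s) (zeta t) = Rabs (s - t).

Definition quasi_geodesic {X : Type} (d : X -> X -> R) (q Q : R)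
    (g : R -> X) (a b : R) : Prop :=
  forall s t, a <= s <= b -> a <= t <= b ->
    Rabs (s - t) / q - Q <= d (g s) (g t) /\ d (g s) (g t) <= q * Rabs (s - t) + Q.

(** Length of g on [a,b] is at most L: every polygonal sum over a
    nondecreasing chain of parameters in [a,b] is at most L
    (i.e. sup over partitions <= L). *)
Fixpoint chain_sum {X : Type} (d : X -> X -> R) (g : R -> X) (t0 : R) (ts : list R) : R :=
  match ts with
  | nil => 0
  | t1 :: ts' => d (g t0) (g t1) + chain_sum d g t1 ts'
  end.

Fixpoint chain_ok (t0 b : R) (ts : list R) : Prop :=
  match ts with
  | nil => True
  | t1 :: ts' => t0 <= t1 /\ t1 <= b /\ chain_ok t1 b ts'
  end.

Definition length_le {X : Type} (d : X -> X -> R) (g : R -> X) (a b L : R) : Prop :=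
  forall t0 ts, a <= t0 -> chain_ok t0 b ts -> chain_sum d g t0 ts <= L.

Definition concat3 {X : Type} (alpha : R -> X) (a : R) (zeta : R -> X) (tz tp : R)
    (gamma : R -> X) : R -> X :=
  fun t => if Rle_dec t a then alpha t
           else if Rle_dec t (a + (tp - tz)) then zeta (tz + (t - a))
           else gamma (t - (a + (tp - tz))).

(** Split the concatenation σ = α · [α₊, p] · γ at its two junctions and check
    the quasi-geodesic inequalities for each pair of legs.  Across a junction the radial segment of ζ helps: since α
    stays in the ball of radius εr and γ stays outside the ball of radius δr,
    the distance between the two image points dominates the length of the radial
    part travelled, and hence (by the triangle inequality) also the displacement of
    the quasi-geodesic leg.  For the pair α, γ the image points are at least
    (δ-ε)r apart, while the total parameter length of σ is O(r), because α ends
    on S(o, εr) and γ has length at most Cr. *)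

From Stdlib Require Import Reals Lra.
Open Scope R_scope.

Lemma div_sub_le_iff (x q Q D : R) : 0 < q -> x / q - Q <= D <-> x <= q * (D + Q).
Proof.
  intros Hq.
  assert (Hx : x = q * (x / q)) by (field; lra).
  split; intros H.
  - rewrite Hx; apply Rmult_le_compat_l; lra.
  - assert (x / q <= D + Q); [|lra].
    apply Rmult_le_reg_l with q; [exact Hq|]. lra.
Qed.

Section Concat3.
Context {X : Type}.
Variables (alpha zeta gamma : R -> X) (a tz tp : R).

Lemma concat3_left t : t <= a -> concat3 alpha a zeta tz tp gamma t = alpha t.
Proof. intros Ht; unfold concat3; destruct (Rle_dec t a); [reflexivity | lra]. Qed.

Lemma concat3_mid t :
  zeta tz = alpha a -> a <= t <= a + (tp - tz) ->
  concat3 alpha a zeta tz tp gamma t = zeta (tz + (t - a)).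
Proof.
  intros Hjoin Ht; unfold concat3.
  destruct (Rle_dec t a).
  - replace t with a by lra. replace (tz + (a - a)) with tz by ring. now rewrite Hjoin.
  - destruct (Rle_dec t (a + (tp - tz))); [reflexivity | lra].
Qed.

Lemma concat3_right t :
  zeta tz = alpha a -> gamma 0 = zeta tp -> tz <= tp -> a + (tp - tz) <= t ->
  concat3 alpha a zeta tz tp gamma t = gamma (t - (a + (tp - tz))).
Proof.
  intros Hjoin1 Hjoin2 Htz Ht; unfold concat3.
  destruct (Rle_dec t a).
  - replace t with a by lra. replace tp with tz in * by lra.
    replace (a - (a + (tz - tz))) with 0 by ring. congruence.
  - destruct (Rle_dec t (a + (tp - tz))); [|reflexivity].
    replace t with (a + (tp - tz)) by lra.
    replace (a + (tp - tz) - (a + (tp - tz))) with 0 by ring.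
    replace (tz + (a + (tp - tz) - a)) with tp by ring. congruence.
Qed.

End Concat3.

Section QuasiGeodesics.
Context {X : Type} {d : X -> X -> R}.
Hypothesis d_metric : is_metric d.

Lemma dist_sym x y : d x y = d y x.
Proof. destruct d_metric as (_ & Hsym & _); apply Hsym. Qed.

Lemma dist_triangle x y z : d x z <= d x y + d y z.
Proof. destruct d_metric as (_ & _ & Htri); apply Htri. Qed.

Lemma dist_ge0 x y : 0 <= d x y.
Proof.
  destruct d_metric as (Hd0 & _ & _).
  assert (d x x = 0) by (apply Hd0; reflexivity).
  pose proof (dist_triangle x y x) as Htri. rewrite (dist_sym y x) in Htri. lra.
Qed.

Lemma geodesic_ray_dist o zeta s t :
  geodesic_ray d o zeta -> 0 <= s <= t -> d (zeta s) (zeta t) = t - s.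
Proof.
  intros [_ Hiso] Hst. rewrite Hiso by lra. rewrite Rabs_left1 by lra. ring.
Qed.

Lemma geodesic_ray_dist_base o zeta t :
  geodesic_ray d o zeta -> 0 <= t -> d o (zeta t) = t.
Proof.
  intros Hray Ht. rewrite <- (proj1 Hray), geodesic_ray_dist with (o := o) by (auto; lra).
  ring.
Qed.

Definition qgeod (q Q : R) (f : R -> X) (a b : R) : Prop :=
  forall s t, a <= s -> s <= t -> t <= b ->
    t - s <= q * (d (f s) (f t) + Q) /\ d (f s) (f t) <= q * (t - s) + Q.

Lemma quasi_geodesicP q Q f a b :
  0 < q -> quasi_geodesic d q Q f a b <-> qgeod q Q f a b.
Proof.
  intros Hq; split.
  - intros Hf s t Has Hst Htb.
    destruct (Hf s t) as [Hlo Hup]; [lra | lra |].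
    rewrite Rabs_left1 in Hlo, Hup by lra.
    split; [apply div_sub_le_iff; [exact Hq | lra] | lra].
  - intros Hf.
    assert (Hord : forall s t, a <= s -> s <= t -> t <= b ->
      Rabs (s - t) / q - Q <= d (f s) (f t) /\ d (f s) (f t) <= q * Rabs (s - t) + Q).
    { intros s t Has Hst Htb. destruct (Hf s t) as [Hlo Hup]; [lra | lra | lra |].
      rewrite Rabs_left1 by lra.
      split; [apply div_sub_le_iff; [exact Hq | lra] | lra]. }
    intros s t Hs Ht.
    destruct (Rle_dec s t); [apply Hord; lra|].
    rewrite dist_sym, Rabs_minus_sym. apply Hord; lra.
Qed.

Lemma qgeod_eq_on q Q f g a b :
  (forall t, a <= t <= b -> f t = g t) -> qgeod q Q f a b -> qgeod q Q g a b.
Proof. intros Hfg Hf s t Has Hst Htb. rewrite <- !Hfg by lra. now apply Hf. Qed.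

Lemma qgeod_shift q Q f a b c :
  qgeod q Q f (a + c) (b + c) -> qgeod q Q (fun t => f (t + c)) a b.
Proof.
  intros Hf s t Has Hst Htb. replace (t - s) with (t + c - (s + c)) by ring.
  apply Hf; lra.
Qed.

Lemma qgeod_mono q Q q' Q' f a b :
  0 <= q -> 0 <= Q -> q <= q' -> Q <= Q' -> qgeod q Q f a b -> qgeod q' Q' f a b.
Proof.
  intros Hq HQ Hqq HQQ Hf s t Has Hst Htb.
  destruct (Hf s t) as [Hlo Hup]; [lra | lra | lra |].
  pose proof (dist_ge0 (f s) (f t)). split; nra.
Qed.

Lemma qgeod_concat q Q c K f a m b :
  0 <= q -> 0 <= Q -> 0 <= c -> q <= K -> 2 * Q <= K -> c <= K ->
  qgeod q Q f a m -> qgeod q Q f m b ->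
  (forall s t, a <= s <= m -> m <= t <= b -> t - s <= c * (d (f s) (f t) + c)) ->
  qgeod K K f a b.
Proof.
  intros Hq HQ Hc HqK HQK HcK Hleft Hright Hcross s t Has Hst Htb.
  pose proof (dist_ge0 (f s) (f t)).
  destruct (Rle_dec t m) as [Htm | Htm]; [|destruct (Rle_dec m s) as [Hms | Hms]].
  - destruct (Hleft s t) as [Hlo Hup]; [lra | lra | lra |]. split; nra.
  - destruct (Hright s t) as [Hlo Hup]; [lra | lra | lra |]. split; nra.
  - split.
    + pose proof (Hcross s t ltac:(lra) ltac:(lra)). nra.
    + destruct (Hleft s m) as [_ Hup1]; [lra | lra | lra |].
      destruct (Hright m t) as [_ Hup2]; [lra | lra | lra |].
      pose proof (dist_triangle (f s) (f m) (f t)). nra.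
Qed.

End QuasiGeodesics.
Arguments qgeod {X} d q Q f a b.

Definition detour_const (q Q : R) : R := 2 * q + 1 + Q.

(* A two-leg path: a radial leg of length [ell] and a (q,Q)-quasi-geodesic leg of
   parameter length [g] with endpoints at distance [p], the whole path joining two
   points at distance [D]. *)
Lemma detour_bound q Q ell g p D :
  0 <= q -> 0 <= Q -> 0 <= D -> ell <= D -> p <= ell + D -> g <= q * (p + Q) ->
  ell + g <= detour_const q Q * (D + detour_const q Q).
Proof. intros; unfold detour_const; nra. Qed.

(* The parameter length of σ is at most (δ-ε) r times this constant. *)
Definition crossing_const (delta eps C q1 Q1 q2 Q2 : R) : R :=
  (q1 * (eps + Q1) + (delta - eps) + q2 * (C + Q2)) / (delta - eps).

Definition concat_const (delta eps C q1 Q1 q2 Q2 : R) : R :=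
  2 * (detour_const q1 Q1 + Q1 + q2 + Q2) + detour_const q2 Q2
  + crossing_const delta eps C q1 Q1 q2 Q2.

Section Concatenation.
Variables (X : Type) (d : X -> X -> R) (o : X).
Hypothesis d_metric : is_metric d.
Variables (delta eps C q1 Q1 q2 Q2 r a b : R) (alpha zeta gamma : R -> X).
Hypotheses (eps_gt0 : 0 < eps) (eps_lt_delta : eps < delta) (C_gt0 : 0 < C)
  (q1_ge1 : 1 <= q1) (Q1_ge0 : 0 <= Q1) (q2_ge1 : 1 <= q2) (Q2_ge0 : 0 <= Q2)
  (r_gt1 : 1 < r).
Hypotheses (a_ge0 : 0 <= a) (alpha_qg : quasi_geodesic d q1 Q1 alpha 0 a)
  (alpha0 : alpha 0 = o)
  (alpha_in_ball : forall t, 0 <= t <= a -> d o (alpha t) <= eps * r)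
  (alpha_end : d o (alpha a) = eps * r).
Hypotheses (zeta_ray : geodesic_ray d o zeta) (zeta_alpha : zeta (eps * r) = alpha a).
Hypotheses (b_ge0 : 0 <= b) (gamma_qg : quasi_geodesic d q2 Q2 gamma 0 b)
  (gamma0 : gamma 0 = zeta (delta * r))
  (gamma_outside : forall t, 0 <= t <= b -> delta * r <= d o (gamma t))
  (gamma_length : length_le d gamma 0 b (C * r)).

Local Notation sigma := (concat3 alpha a zeta (eps * r) (delta * r) gamma).
Local Notation mid := (a + (delta * r - eps * r)).

Lemma crossing_const_ge0 : 0 <= crossing_const delta eps C q1 Q1 q2 Q2.
Proof.
  unfold crossing_const.
  assert (0 <= q1 * (eps + Q1)) by (apply Rmult_le_pos; lra).
  assert (0 <= q2 * (C + Q2)) by (apply Rmult_le_pos; lra).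
  apply Rmult_le_pos; [lra |].
  apply Rlt_le, Rinv_0_lt_compat; lra.
Qed.

Lemma concat_const_gt0 : 0 < concat_const delta eps C q1 Q1 q2 Q2.
Proof. pose proof crossing_const_ge0. unfold concat_const, detour_const. lra. Qed.

Lemma qgeod_alpha : qgeod d q1 Q1 alpha 0 a.
Proof. apply quasi_geodesicP; [assumption | lra | assumption]. Qed.

Lemma qgeod_gamma : qgeod d q2 Q2 gamma 0 b.
Proof. apply quasi_geodesicP; [assumption | lra | assumption]. Qed.

Lemma alpha_domain_le : a <= q1 * (eps * r + Q1).
Proof.
  destruct (qgeod_alpha 0 a) as [Hlo _]; [lra | lra | lra |].
  rewrite alpha0, alpha_end in Hlo. lra.
Qed.

Lemma gamma_domain_le : b <= q2 * (C * r + Q2).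
Proof.
  destruct (qgeod_gamma 0 b) as [Hlo _]; [lra | lra | lra |].
  assert (d (gamma 0) (gamma b) <= C * r).
  { pose proof (gamma_length 0 (cons b nil)) as Hl. simpl in Hl. lra. }
  nra.
Qed.

Lemma sigma_alpha t : t <= a -> sigma t = alpha t.
Proof. apply concat3_left. Qed.

Lemma sigma_zeta t : a <= t <= mid -> sigma t = zeta (eps * r + (t - a)).
Proof. intros; apply concat3_mid; assumption. Qed.

Lemma sigma_gamma t : mid <= t -> sigma t = gamma (t - mid).
Proof. intros; apply concat3_right; auto; nra. Qed.

Lemma qgeod_sigma_alpha : qgeod d q1 Q1 sigma 0 a.
Proof.
  apply qgeod_eq_on with alpha; [intros; symmetry; apply sigma_alpha; lra |].
  exact qgeod_alpha.
Qed.

Lemma qgeod_sigma_zeta : qgeod d 1 0 sigma a mid.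
Proof.
  intros s t Has Hst Htm.
  rewrite !sigma_zeta by lra.
  rewrite geodesic_ray_dist with (o := o) by (auto; nra). split; lra.
Qed.

Lemma qgeod_sigma_gamma : qgeod d q2 Q2 sigma mid (mid + b).
Proof.
  apply qgeod_eq_on with (fun t => gamma (t + - mid));
    [intros; rewrite sigma_gamma by lra; f_equal; ring |].
  apply qgeod_shift. replace (mid + - mid) with 0 by ring.
  replace (mid + b + - mid) with b by ring.
  exact qgeod_gamma.
Qed.

Lemma cross_alpha_zeta s t : 0 <= s <= a -> a <= t <= mid ->
  t - s <= detour_const q1 Q1 * (d (sigma s) (sigma t) + detour_const q1 Q1).
Proof.
  intros Hs Ht. rewrite sigma_alpha, sigma_zeta by lra.
  set (u := eps * r + (t - a)).
  assert (Hleg : d (alpha a) (zeta u) = t - a).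
  { rewrite <- zeta_alpha, geodesic_ray_dist with (o := o) by (auto; unfold u; nra).
    unfold u; ring. }
  assert (Hu : d o (zeta u) = u) by (apply geodesic_ray_dist_base; auto; unfold u; nra).
  pose proof (dist_triangle d_metric o (alpha s) (zeta u)).
  pose proof (dist_triangle d_metric (alpha s) (alpha a) (zeta u)).
  pose proof (dist_triangle d_metric (alpha s) (zeta u) (alpha a)).
  rewrite (dist_sym d_metric (zeta u)) in *.
  pose proof (alpha_in_ball s Hs).
  destruct (qgeod_alpha s a) as [Hlo _]; [lra | lra | lra |].
  replace (t - s) with ((t - a) + (a - s)) by ring.
  apply detour_bound with (p := d (alpha s) (alpha a));
    [lra | lra | apply (dist_ge0 d_metric) | unfold u in *; lra | lra | exact Hlo].
Qed.

Lemma cross_zeta_gamma s t : a <= s <= mid -> mid <= t <= mid + b ->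
  t - s <= detour_const q2 Q2 * (d (sigma s) (sigma t) + detour_const q2 Q2).
Proof.
  intros Hs Ht. rewrite sigma_zeta, sigma_gamma by lra.
  set (u := eps * r + (s - a)). set (tt := t - mid).
  assert (Hleg : d (zeta u) (gamma 0) = mid - s).
  { rewrite gamma0, geodesic_ray_dist with (o := o) by (auto; unfold u; nra).
    unfold u; ring. }
  assert (Hu : d o (zeta u) = u) by (apply geodesic_ray_dist_base; auto; unfold u; nra).
  pose proof (dist_triangle d_metric o (zeta u) (gamma tt)).
  pose proof (dist_triangle d_metric (gamma 0) (zeta u) (gamma tt)).
  pose proof (dist_triangle d_metric (zeta u) (gamma 0) (gamma tt)).
  rewrite (dist_sym d_metric (gamma 0) (zeta u)) in *.
  pose proof (gamma_outside tt ltac:(unfold tt; lra)).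
  destruct (qgeod_gamma 0 tt) as [Hlo _]; [lra | unfold tt; lra | unfold tt; lra |].
  replace (t - s) with ((mid - s) + (tt - 0)) by (unfold tt; ring).
  apply detour_bound with (p := d (gamma 0) (gamma tt));
    [lra | lra | apply (dist_ge0 d_metric) | unfold u in *; lra | lra | exact Hlo].
Qed.

Lemma cross_alpha_gamma s t : 0 <= s <= a -> mid <= t <= mid + b ->
  t - s <= crossing_const delta eps C q1 Q1 q2 Q2 * d (sigma s) (sigma t).
Proof.
  intros Hs Ht. rewrite sigma_alpha, sigma_gamma by lra.
  assert (Hfar : (delta - eps) * r <= d (alpha s) (gamma (t - mid))).
  { pose proof (dist_triangle d_metric o (alpha s) (gamma (t - mid))).
    pose proof (alpha_in_ball s Hs). pose proof (gamma_outside (t - mid) ltac:(lra)).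
    lra. }
  assert (Hspan : t - s <= crossing_const delta eps C q1 Q1 q2 Q2 * ((delta - eps) * r)).
  { unfold crossing_const.
    replace ((q1 * (eps + Q1) + (delta - eps) + q2 * (C + Q2)) / (delta - eps)
      * ((delta - eps) * r))
      with ((q1 * (eps + Q1) + (delta - eps) + q2 * (C + Q2)) * r) by (field; lra).
    pose proof alpha_domain_le. pose proof gamma_domain_le.
    assert (0 <= q1 * Q1 * (r - 1)) by (apply Rmult_le_pos; nra).
    assert (0 <= q2 * Q2 * (r - 1)) by (apply Rmult_le_pos; nra).
    nra. }
  pose proof crossing_const_ge0. nra.
Qed.

Lemma qgeod_sigma_alpha_zeta :
  qgeod d (detour_const q1 Q1 + Q1) (detour_const q1 Q1 + Q1) sigma 0 mid.
Proof.
  apply (qgeod_concat d_metric) with q1 Q1 (detour_const q1 Q1) a;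
    unfold detour_const; try lra.
  - exact qgeod_sigma_alpha.
  - apply (qgeod_mono d_metric 1 0); [lra | lra | lra | lra | exact qgeod_sigma_zeta].
  - intros s t Hs Ht. apply cross_alpha_zeta; lra.
Qed.

Lemma cross_left_gamma s t : 0 <= s <= mid -> mid <= t <= mid + b ->
  t - s <= (detour_const q2 Q2 + crossing_const delta eps C q1 Q1 q2 Q2)
           * (d (sigma s) (sigma t) + (detour_const q2 Q2 + crossing_const delta eps C q1 Q1 q2 Q2)).
Proof.
  intros Hs Ht.
  pose proof crossing_const_ge0. pose proof (dist_ge0 d_metric (sigma s) (sigma t)).
  assert (0 <= detour_const q2 Q2) by (unfold detour_const; lra).
  destruct (Rle_dec s a).
  - pose proof (cross_alpha_gamma s t ltac:(lra) Ht). nra.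
  - pose proof (cross_zeta_gamma s t ltac:(lra) Ht). nra.
Qed.

Lemma qgeod_sigma :
  qgeod d (concat_const delta eps C q1 Q1 q2 Q2) (concat_const delta eps C q1 Q1 q2 Q2)
    sigma 0 (mid + b).
Proof.
  pose proof crossing_const_ge0.
  assert (0 <= detour_const q1 Q1 /\ 0 <= detour_const q2 Q2) as []
    by (unfold detour_const; lra).
  apply (qgeod_concat d_metric) with
    (detour_const q1 Q1 + Q1 + q2) (detour_const q1 Q1 + Q1 + Q2)
    (detour_const q2 Q2 + crossing_const delta eps C q1 Q1 q2 Q2) mid;
    unfold concat_const; try lra.
  - apply (qgeod_mono d_metric (detour_const q1 Q1 + Q1) (detour_const q1 Q1 + Q1));
      [lra | lra | lra | lra | exact qgeod_sigma_alpha_zeta].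
  - apply (qgeod_mono d_metric q2 Q2); [lra | lra | lra | lra | exact qgeod_sigma_gamma].
  - exact cross_left_gamma.
Qed.

End Concatenation.

Theorem mainTheorem3 :
  forall (delta eps C q1 Q1 q2 Q2 : R),
    0 < eps -> eps < delta -> 0 < C ->
    1 <= q1 -> 0 <= Q1 -> 1 <= q2 -> 0 <= Q2 ->
  exists M : R,
  forall (X : Type) (d : X -> X -> R) (o : X),
    is_metric d -> proper_space d -> geodesic_space d ->
  forall (r : R) (alpha : R -> X) (a : R) (zeta : R -> X) (tz : R)
         (gamma : R -> X) (b : R),
    1 < r ->
    (* alpha : [0,a] -> X is a (q1,Q1)-quasi-geodesic segment from o *)
    0 <= a -> quasi_geodesic d q1 Q1 alpha 0 a -> alpha 0 = o ->
    (forall t, 0 <= t <= a -> d o (alpha t) <= eps * r) ->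
    d o (alpha a) = eps * r ->
    (* zeta geodesic ray from o passing through alpha_+ = alpha a *)
    geodesic_ray d o zeta -> 0 <= tz -> zeta tz = alpha a ->
    (* p = zeta (delta r) is the point of zeta on S(o, delta r);
       gamma : [0,b] -> X a (q2,Q2)-quasi-geodesic from p *)
    0 <= b -> quasi_geodesic d q2 Q2 gamma 0 b -> gamma 0 = zeta (delta * r) ->
    (forall t, 0 <= t <= b -> delta * r <= d o (gamma t)) ->
    length_le d gamma 0 b (C * r) ->
    quasi_geodesic d M M (concat3 alpha a zeta tz (delta * r) gamma)
      0 (a + (delta * r - tz) + b).
Proof.
  intros delta eps C q1 Q1 q2 Q2 Heps Hdelta HC Hq1 HQ1 Hq2 HQ2.
  exists (concat_const delta eps C q1 Q1 q2 Q2).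
  intros X d o Hd _ _ r alpha a zeta tz gamma b Hr Ha Halpha Halpha0 Hball Hend
    Hzeta Htz Hthrough Hb Hgamma Hgamma0 Hout Hlen.
  assert (tz = eps * r) as ->.
  { rewrite <- Hend, <- Hthrough, geodesic_ray_dist_base with (o := o) by assumption.
    reflexivity. }
  apply quasi_geodesicP; [exact Hd | apply concat_const_gt0; assumption |].
  eapply qgeod_sigma; eassumption.
Qed.
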